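(* Let $p$ be an odd prime and $r\ge2$ even. Then $D_{S(p^r)^*}\le5$.
   Context: For a natural number $m$, $\mathbb Z_m=\mathbb Z/m\mathbb Z$, $S(m)=\{x^2:x\in\mathbb Z_m\}$, $S(m)^*=S(m)\setminus\{0\}$. For $A\subseteq\mathbb Z_m$, a sequence $(y_1,\dots,y_t)$ ($t\ge1$) is an $A$-weighted zero-sum sequence if there exist $a_i\in A$ with $\sum a_iy_i=0$; a sequence has an $A$-weighted zero-sum subsequence if some nonempty subsequence is one. $D_A(m)$ is the least positive integer $t$ such that every sequence of length $t$ in $\mathbb Z_m$ has an $A$-weighted zero-sum subsequence; $D_{S(m)^*}=D_{S(m)^*}(m)$. *)

From mathcomp Require Import all_boot all_algebra.
Set Implicit Arguments. Unset Strict Implicit. Unset Printing Implicit Defensive.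
Import GRing.Theory.
Local Open Scope ring_scope.

(* 'Z_m is Z/mZ for m >= 2 (used only with m = p^r >= 9). *)

Definition Sq (m : nat) : {set 'Z_m} := [set x ^+ 2 | x : 'Z_m].
Definition Sqstar (m : nat) : {set 'Z_m} := Sq m :\ 0.

Definition has_wzs_subseq (m : nat) (A : {set 'Z_m}) (t : nat)
    (y : 'I_t -> 'Z_m) : Prop :=
  exists I : {set 'I_t}, I != set0 /\
    exists a : 'I_t -> 'Z_m,
      (forall i, i \in I -> a i \in A) /\ \sum_(i in I) a i * y i = 0.

Definition all_have_wzs (m : nat) (A : {set 'Z_m}) (t : nat) : Prop :=
  forall y : 'I_t -> 'Z_m, has_wzs_subseq A y.

Definition is_DA (m : nat) (A : {set 'Z_m}) (t : nat) : Prop :=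
  (0 < t)%N /\ all_have_wzs A t /\
  forall t', (0 < t')%N -> all_have_wzs A t' -> (t <= t')%N.

(* Use only the weights (p^(r/2 - 1) s)^2 = p^(r-2) s^2: they are squares, they vanish in
   Z_(p^r) exactly when p | s, and a sum of such weights times the y_i vanishes exactly
   when p^2 divides sum_i s_i^2 y_i.  If p^2 | y_i, the single term y_i with s = 1 is a
   zero-sum.  Otherwise, among five terms three have the same p-adic valuation, 0 or 1, and
   it suffices to solve s_1^2 y_1 + s_2^2 y_2 + s_3^2 y_3 = 0 mod p^2 with p not dividing
   s_3.  Modulo p this holds with s_3 = 1, because in F_p (as in every finite field of odd
   order) at least half of the elements are squares, so the sets a S and c - b S meet.
   Valuation 1 then gives the congruence mod p^2 directly; valuation 0 needs the Hensel
   step s_3 = 1 + p c. *)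

From Stdlib Require Import Classical_Prop Wf_nat.
From mathcomp Require Import all_boot all_algebra zify ring.
Import GRing.Theory.

Set Implicit Arguments.
Unset Strict Implicit.
Unset Printing Implicit Defensive.

Section FiniteFieldSquares.
Local Open Scope ring_scope.

Lemma card_finField_le_double_sq (F : finFieldType) :
  (#|F| <= 2 * #|[set x ^+ 2 | x : F]|)%N.
Proof.
rewrite -[X in (X <= _)%N]sum1_card (partition_big_imset (fun x : F => x ^+ 2)) /=.
rewrite mulnC -sum_nat_const; apply: leq_sum => _ /imsetP[x _ ->].
rewrite sum1_card (leq_trans _ (leq_ltn_trans (leq_b1 (x != - x)) _)) //.
by rewrite -cards2; apply/subset_leq_card/subsetP => y; rewrite !inE -eqf_sqr; apply.
Qed.

Lemma finField_sqr_comb_surj (F : finFieldType) (a b c : F) :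
  odd #|F| -> a != 0 -> b != 0 -> exists x y, a * x ^+ 2 + b * y ^+ 2 = c.
Proof.
move=> oddF a0 b0; set SQ := [set x ^+ 2 | x : F].
set A := [set a * s | s in SQ]; set B := [set c - b * s | s in SQ].
have cardA : #|A| = #|SQ| by apply: card_imset; apply: mulfI.
have cardB : #|B| = #|SQ| by apply: card_imset => s t /addrI/oppr_inj/mulfI->.
have : (0 < #|A :&: B|)%N.
  have := card_finField_le_double_sq F; rewrite -/SQ.
  have := subset_leq_card (subsetT (A :|: B)); rewrite cardsT.
  have := cardsU A B; rewrite cardA cardB.
  by move: (odd_double_half #|F|); rewrite oddF -mul2n /=; lia.
case/card_gt0P=> _ /setIP[/imsetP[_ /imsetP[x _ ->] ->]].
by case/imsetP=> _ /imsetP[y _ ->] /eqP; rewrite eq_sym subr_eq => /eqP; exists x, y.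
Qed.

End FiniteFieldSquares.

Lemma sqr_comb_dvdn (p y1 y2 y3 : nat) : prime p -> odd p ->
  ~~ (p %| y1) -> ~~ (p %| y2) -> exists s1 s2, p %| s1 ^ 2 * y1 + s2 ^ 2 * y2 + y3.
Proof.
move=> p_pr p_odd; have chp := pchar_Fp p_pr.
rewrite !(dvdn_pcharf chp) => y1p y2p.
have oddFp : odd #|'F_p| by rewrite card_Fp.
have [x [y sum_y3]] := @finField_sqr_comb_surj _ _ _ (- y3%:R)%R oddFp y1p y2p.
exists x, y; rewrite (dvdn_pcharf chp) !natrD !natrM !natr_Zp -!expr2.
by rewrite ![(_ ^+ 2 * _)%R]mulrC sum_y3 addNr.
Qed.

Lemma linear_dvdn_solve (p a u : nat) : prime p -> ~~ (p %| u) ->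
  exists c, p %| a + c * u.
Proof.
move=> p_pr; have chp := pchar_Fp p_pr; rewrite (dvdn_pcharf chp) => up.
exists (- a%:R / u%:R : 'F_p)%R.
by rewrite (dvdn_pcharf chp) natrD natrM natr_Zp mulfVK // addrN.
Qed.

Lemma sqr_comb3_dvdn_sqr_coprime (p y1 y2 y3 : nat) : prime p -> odd p ->
  ~~ (p %| y1) -> ~~ (p %| y2) -> ~~ (p %| y3) ->
  exists s1 s2 s3, ~~ (p %| s3) /\ p ^ 2 %| s1 ^ 2 * y1 + s2 ^ 2 * y2 + s3 ^ 2 * y3.
Proof.
move=> p_pr p_odd y1p y2p y3p.
have [s1 [s2 /dvdnP[k sum_k]]] := sqr_comb_dvdn y3 p_pr p_odd y1p y2p.
have y3p2 : ~~ (p %| 2 * y3).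
  by rewrite Euclid_dvdM // negb_or y3p andbT dvdn_prime2 //; case: eqP p_odd => [->|].
have [c /dvdnP[q k_q]] := linear_dvdn_solve k p_pr y3p2.
exists s1, s2, (1 + p * c); split.
  by rewrite dvdn_addl ?dvdn_mulr // dvdn1 gtn_eqF ?prime_gt1.
apply/dvdnP; exists (q + c ^ 2 * y3).
have -> : (1 + p * c) ^ 2 * y3 = y3 + p * (c * (2 * y3)) + p ^ 2 * (c ^ 2 * y3) by ring.
by rewrite !addnA sum_k mulnC -mulnDr k_q; ring.
Qed.

Lemma sqr_comb3_dvdn_sqr_pmul (p y1 y2 y3 : nat) : prime p -> odd p ->
  p %| y1 -> p %| y2 -> p %| y3 ->
  ~~ (p ^ 2 %| y1) -> ~~ (p ^ 2 %| y2) -> ~~ (p ^ 2 %| y3) ->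
  exists s1 s2 s3, ~~ (p %| s3) /\ p ^ 2 %| s1 ^ 2 * y1 + s2 ^ 2 * y2 + s3 ^ 2 * y3.
Proof.
move=> p_pr p_odd /dvdnP[z1 ->] /dvdnP[z2 ->] /dvdnP[z3 ->].
rewrite -mulnn !dvdn_pmul2r ?prime_gt0 // => z1p z2p _.
have [s1 [s2 /dvdnP[k sum_k]]] := sqr_comb_dvdn z3 p_pr p_odd z1p z2p.
exists s1, s2, 1; split; first by rewrite dvdn1 gtn_eqF ?prime_gt1.
by apply/dvdnP; exists k; rewrite exp1n mul1n !mulnA -!mulnDl sum_k; ring.
Qed.

Lemma sqr_comb3_dvdn_sqr (p y1 y2 y3 : nat) : prime p -> odd p ->
  (p %| y1) = (p %| y2) -> (p %| y1) = (p %| y3) ->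
  ~~ (p ^ 2 %| y1) -> ~~ (p ^ 2 %| y2) -> ~~ (p ^ 2 %| y3) ->
  exists s1 s2 s3, ~~ (p %| s3) /\ p ^ 2 %| s1 ^ 2 * y1 + s2 ^ 2 * y2 + s3 ^ 2 * y3.
Proof.
move=> p_pr p_odd e12 e13; have [y1p|y1p] := boolP (p %| y1).
  by apply: sqr_comb3_dvdn_sqr_pmul; rewrite -?e12 -?e13.
by move=> *; apply: sqr_comb3_dvdn_sqr_coprime; rewrite -?e12 -?e13.
Qed.

Lemma has_wzs_subseq_setD0 (m t : nat) (A : {set 'Z_m}) (y : 'I_t -> 'Z_m)
    (I : {set 'I_t}) (a : 'I_t -> 'Z_m) :
  {in I, forall i, a i \in A} -> (exists2 i, i \in I & a i != 0%R) ->
  (\sum_(i in I) a i * y i)%R = 0%R -> has_wzs_subseq (A :\ 0%R) y.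
Proof.
move=> aA [i0 i0I ai0] sum0; exists [set i in I | a i != 0%R]; split.
  by apply/set0Pn; exists i0; rewrite inE i0I.
exists a; split=> [i|]; first by rewrite !inE => /andP[/aA-> ->].
rewrite -[RHS]sum0 [RHS](bigID (fun i => a i != 0%R)) /= [X in _ = (_ + X)%R]big1 ?addr0.
  by apply: eq_bigl => i; rewrite !inE.
by move=> i /andP[_ /negPn/eqP->]; rewrite mul0r.
Qed.

Lemma three_in_same_class (T : finType) (P : pred T) : 4 < #|T| ->
  exists i1 i2 i3, [/\ i1 != i2, i1 != i3 & i2 != i3] /\ P i1 = P i2 /\ P i1 = P i3.
Proof.
move=> T_gt4; have : 2 < #|[set x | P x]| \/ 2 < #|~: [set x | P x]|.
  by move: (cardsC [set x | P x]); lia.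
case=> /card_gt2P[i1 [i2 [i3 [[] /[!inE] P1 P2 P3 [n12 n23 n31]]]]];
  exists i1, i2, i3; (split; first by rewrite n12 n23 eq_sym n31).
  by rewrite P1 P2 P3.
by rewrite (negbTE P1) (negbTE P2) (negbTE P3).
Qed.

Lemma ex_minimal (P : nat -> Prop) :
  (exists n, P n) -> exists n, P n /\ forall n', P n' -> n <= n'.
Proof.
move=> exP; have [n [[Pn n_min] _]] :=
  dec_inh_nat_subset_has_unique_least_element P (fun n => classic (P n)) exP.
by exists n; split=> // n' /n_min/leP.
Qed.

Section SquareWeights.

Variables p k : nat.
Hypotheses (p_pr : prime p) (k_gt0 : 0 < k).

Local Notation m := (p ^ k.*2).

Lemma expn_double_split : m = (p ^ k.-1) ^ 2 * p ^ 2.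
Proof. by rewrite -expnM -expnD -{1}(prednK k_gt0) -mul2n mulnC mulSn addnC. Qed.

Lemma expn_double_gt1 : 1 < m.
Proof.
rewrite expn_double_split; have := prime_gt1 p_pr.
have : 0 < p ^ k.-1 by rewrite expn_gt0 prime_gt0.
nia.
Qed.

Lemma natr_Zm_eq0 n : ((n%:R : 'Z_m) == 0)%R = (m %| n).
Proof. by rewrite /dvdn -(val_Zp_nat expn_double_gt1). Qed.

Definition sqr_weight (s : nat) : 'Z_m := ((p ^ k.-1 * s)%:R ^+ 2)%R.

Lemma sqr_weight_Sq s : sqr_weight s \in Sq m.
Proof. exact: imset_f. Qed.

Lemma natr_sqr_weight s : sqr_weight s = ((p ^ k.-1) ^ 2 * s ^ 2)%:R%R.
Proof. by rewrite /sqr_weight -natrX expnMn. Qed.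

Lemma sqr_weight_eq0 s : (sqr_weight s == 0)%R = (p %| s).
Proof.
rewrite natr_sqr_weight natr_Zm_eq0 expn_double_split.
by rewrite dvdn_pmul2l ?expn_gt0 ?prime_gt0 // dvdn_pexp2r.
Qed.

Lemma sum_sqr_weight t (y : 'I_t -> 'Z_m) (ix : seq 'I_t) (s : 'I_t -> nat) :
  (\sum_(i <- ix) sqr_weight (s i) * y i)%R =
  ((p ^ k.-1) ^ 2 * \sum_(i <- ix) s i ^ 2 * y i)%:R%R.
Proof.
rewrite natrM natr_sum big_distrr /=; apply: eq_bigr => i _.
by rewrite natr_sqr_weight !natrM natr_Zp !mulrA.
Qed.

Lemma has_wzs_subseq_sqr_weight t (y : 'I_t -> 'Z_m) (ix : seq 'I_t)
    (s : 'I_t -> nat) :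
  uniq ix -> has (fun i => ~~ (p %| s i)) ix ->
  p ^ 2 %| \sum_(i <- ix) s i ^ 2 * y i -> has_wzs_subseq (Sqstar m) y.
Proof.
move=> ix_uniq /hasP[i0 i0ix si0] dvd_sum.
apply: (@has_wzs_subseq_setD0 _ _ _ _ [set i in ix] (fun i => sqr_weight (s i))).
- by move=> i _; apply: sqr_weight_Sq.
- by exists i0; rewrite ?inE ?sqr_weight_eq0.
rewrite (eq_bigl (mem ix)) => [|i]; last by rewrite inE.
apply/eqP; rewrite -big_uniq // sum_sqr_weight natr_Zm_eq0.
by rewrite [X in X %| _]expn_double_split dvdn_mul.
Qed.

Hypothesis p_odd : odd p.

Lemma all_have_wzs_Sqstar5 : all_have_wzs (Sqstar m) 5.
Proof.
move=> y; have p_ndvd1 : ~~ (p %| 1) by rewrite dvdn1 gtn_eqF ?prime_gt1.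
have [/existsP[i yi]|/existsPn y_ndvd] := boolP [exists i, p ^ 2 %| y i].
  apply: (@has_wzs_subseq_sqr_weight _ y [:: i] (fun=> 1));
  by rewrite ?big_seq1 /= ?mul1n ?p_ndvd1.
have [|i1 [i2 [i3 [[n12 n13 n23] [e12 e13]]]]] :=
  @three_in_same_class _ (fun i => p %| y i); first by rewrite card_ord.
have [s1 [s2 [s3 [s3p dvd_sum]]]] :=
  sqr_comb3_dvdn_sqr p_pr p_odd e12 e13 (y_ndvd i1) (y_ndvd i2) (y_ndvd i3).
pose s i := if i == i1 then s1 else if i == i2 then s2 else s3.
apply: (@has_wzs_subseq_sqr_weight _ y [:: i1; i2; i3] s).
- by rewrite /= !inE negb_or n12 n13 n23.
- by rewrite /= /s (eq_sym i3) (negbTE n13) (eq_sym i3) (negbTE n23) s3p !orbT.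
by rewrite !big_cons big_nil /s eqxx (eq_sym i2) (negbTE n12) eqxx
  (eq_sym i3) (negbTE n13) (eq_sym i3) (negbTE n23) addn0 !addnA.
Qed.

End SquareWeights.

Theorem mainTheorem14 (p r : nat) :
  prime p -> odd p -> (2 <= r)%N -> ~~ odd r ->
  exists t : nat, is_DA (Sqstar (p ^ r)) t /\ (t <= 5)%N.
Proof.
move=> p_pr p_odd r_ge2 r_even.
have k_gt0 : 0 < r./2 by move: r_ge2; rewrite -(even_halfK r_even); case: (r./2).
rewrite -(even_halfK r_even).
have wzs5 : all_have_wzs (Sqstar (p ^ (r./2).*2)) 5 by apply: all_have_wzs_Sqstar5.
have [|t [[t_gt0 wzs_t] t_min]] :=
  @ex_minimal (fun t => 0 < t /\ all_have_wzs (Sqstar (p ^ (r./2).*2)) t).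
  by exists 5.
exists t; split; last exact: t_min.
by split=> //; split=> // t' *; apply: t_min.
Qed.
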